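(* For every digraph $D$ and every integer $k$ with $2\le k\le |V(D)|$, we have $\kappa_k(D)\le\delta^+(D)$ and $\kappa_k(D)\le\delta^-(D)$.
   Context: Digraphs are finite, without loops and without parallel arcs. $\delta^+(D)$ and $\delta^-(D)$ denote the minimum out-degree and minimum in-degree of $D$. A digraph is strong if for every ordered pair of vertices $u,v$ there is a directed path from $u$ to $v$; a one-vertex digraph is strong. For $S\subseteq V(D)$, strong subgraphs $D_1,\dots,D_p$ of $D$ each containing $S$ are $S$-internally disjoint if $V(D_i)\cap V(D_j)=S$ and $A(D_i)\cap A(D_j)=\emptyset$ for all $i<j$. $\kappa_S(D)$ is the maximum number of $S$-internally disjoint strong subgraphs containing $S$, and $\kappa_k(D)=\min\{\kappa_S(D): S\subseteq V(D),\ |S|=k\}$. *)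

From mathcomp Require Import all_boot.
Set Implicit Arguments. Unset Strict Implicit. Unset Printing Implicit Defensive.

(* A digraph is a finite vertex type V with an arc relation D : rel V
   (a relation rules out parallel arcs; loops are excluded by a hypothesis
   `irreflexive D` in the theorem). V(D) = all of V. *)

Section Digraph.
Variables (V : finType) (D : rel V).

Definition outdeg (v : V) : nat := #|[set w | D v w]|.
Definition indeg (v : V) : nat := #|[set u | D u v]|.

(* minimum out-/in-degree (idx #|V| is never reached when V is nonempty) *)
Definition min_outdeg : nat := \big[minn/#|V|]_(v : V) outdeg v.
Definition min_indeg : nat := \big[minn/#|V|]_(v : V) indeg v.

Definition subgraph (H : {set V} * {set V * V}) : bool :=
  [forall a in H.2, D a.1 a.2 && (a.1 \in H.1) && (a.2 \in H.1)].

Definition strong_sub (H : {set V} * {set V * V}) : bool :=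
  subgraph H &&
  [forall u in H.1, forall v in H.1, connect (fun x y => (x, y) \in H.2) u v].

Definition has_int_disjoint (S : {set V}) (p : nat) : bool :=
  [exists F : {ffun 'I_p -> {set V} * {set V * V}},
     [forall i : 'I_p, strong_sub (F i) && (S \subset (F i).1)] &&
     [forall i : 'I_p, forall j : 'I_p, (i < j)%N ==>
        (((F i).1 :&: (F j).1 == S) && [disjoint (F i).2 & (F j).2])]].

(* kappa_S(D): the maximum such p.  Search range p <= #|V*V|; for |S| >= 2
   each subgraph has an arc and arcs are disjoint, so the true maximum is
   at most the number of arcs < #|V * V|.+1, i.e. this is the exact max. *)
Definition kappaS (S : {set V}) : nat :=
  \max_(p < #|{: V * V}|.+1 | has_int_disjoint S p) p.

(* kappa_k(D) = min over k-subsets S (idx never reached when k <= |V|). *)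
Definition kappa_k (k : nat) : nat :=
  \big[minn/#|{: V * V}|.+1]_(S : {set V} | #|S| == k) kappaS S.

End Digraph.

From mathcomp Require Import all_boot.

Set Implicit Arguments.
Unset Strict Implicit.
Unset Printing Implicit Defensive.

(* Take a k-set S containing v and some other vertex u.  Each of the S-internally
   disjoint strong subgraphs contains a path from v to u, hence an arc leaving v,
   and these arcs are distinct because the subgraphs are arc-disjoint; so their
   number is at most the out-degree of v.  Dually with a path from u to v. *)

Lemma connect_neq_first (T : finType) (e : rel T) u v :
  connect e u v -> u != v -> exists w, e u w.
Proof.
case/connectP=> [[|w p] /= ewp ->]; first by rewrite eqxx.
by case/andP: ewp => euw _ _; exists w.
Qed.

Lemma connect_neq_last (T : finType) (e : rel T) u v :
  connect e u v -> u != v -> exists w, e w v.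
Proof.
rewrite -[connect e u v]connect_rev eq_sym => /connect_neq_first; exact.
Qed.

Lemma leq_card_disjoint_hits (T : finType) p (A : 'I_p -> {set T}) (X : {set T}) :
  (forall i j, i != j -> [disjoint A i & A j]) ->
  (forall i, exists2 x, x \in A i & x \in X) -> (p <= #|X|)%N.
Proof.
move=> disjA hitX.
have /fin_all_exists [f fP] : forall i, exists x, (x \in A i) && (x \in X).
  by move=> i; have [x xA xX] := hitX i; exists x; rewrite xA.
have f_inj : injective f.
  move=> i j fij; apply/eqP/contraT => /disjA /pred0P /(_ (f i)) /=.
  by case/andP: (fP i) => -> _; rewrite fij; case/andP: (fP j) => ->.
rewrite -[p]card_ord -(card_imset _ f_inj); apply/subset_leq_card/subsetP.
by move=> _ /imsetP [i _ ->]; case/andP: (fP i).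
Qed.

Lemma geq_bigmin_cond (I : finType) (P : pred I) (F : I -> nat) z i :
  P i -> (\big[minn/z]_(j | P j) F j <= F i)%N.
Proof.
move=> Pi; have : i \in index_enum I by rewrite mem_index_enum.
elim: (index_enum I) => // j s IH; rewrite inE big_cons => /predU1P [<-|/IH].
  by rewrite Pi geq_minl.
by case: ifP => // _; apply: leq_trans (geq_minr _ _).
Qed.

Section DegreeBounds.
Variables (V : finType) (D : rel V).

Lemma subgraph_arc H a : subgraph D H -> a \in H.2 -> D a.1 a.2.
Proof. by move=> /forallP /(_ a) /implyP Ha /Ha /andP [/andP []]. Qed.

Lemma strong_sub_connect H u v :
  strong_sub D H -> u \in H.1 -> v \in H.1 ->
  connect (fun x y => (x, y) \in H.2) u v.
Proof. by case/andP=> _ /forallP /(_ u) /implyP Hu /Hu /forallP /(_ v) /implyP. Qed.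

Lemma strong_sub_out_arc H u v :
  strong_sub D H -> u \in H.1 -> v \in H.1 -> u != v ->
  exists2 w, (u, w) \in H.2 & D u w.
Proof.
move=> sH uH vH /(connect_neq_first (strong_sub_connect sH uH vH)) [w uwH].
by exists w; rewrite // (subgraph_arc (andP sH).1 uwH).
Qed.

Lemma strong_sub_in_arc H u v :
  strong_sub D H -> u \in H.1 -> v \in H.1 -> u != v ->
  exists2 w, (w, v) \in H.2 & D w v.
Proof.
move=> sH uH vH /(connect_neq_last (strong_sub_connect sH uH vH)) [w wvH].
by exists w; rewrite // (subgraph_arc (andP sH).1 wvH).
Qed.

Lemma kappaS_leq_card (S : {set V}) (X : {set V * V}) :
  (forall H, strong_sub D H -> S \subset H.1 -> exists2 a, a \in H.2 & a \in X) ->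
  (kappaS D S <= #|X|)%N.
Proof.
move=> hitX; apply/bigmax_leqP => -[p _] /= /existsP [F /andP [/forallP sF /forallP dF]].
apply: (leq_card_disjoint_hits (A := fun i => (F i).2)); last first.
  by move=> i; case/andP: (sF i) => sFi SFi; apply: hitX.
move=> i j; rewrite neq_ltn => /orP [] ltij; last rewrite disjoint_sym.
  by have /forallP /(_ j) /implyP /(_ ltij) /andP [] := dF i.
by have /forallP /(_ i) /implyP /(_ ltij) /andP [] := dF j.
Qed.

Lemma kappaS_leq_outdeg (S : {set V}) u v :
  u \in S -> v \in S -> u != v -> (kappaS D S <= outdeg D u)%N.
Proof.
move=> uS vS uv; apply: leq_trans (leq_imset_card (pair u) _).
apply: kappaS_leq_card => H sH /subsetP SH.
have [w uwH Duw] := strong_sub_out_arc sH (SH u uS) (SH v vS) uv.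
by exists (u, w); rewrite // imset_f ?inE.
Qed.

Lemma kappaS_leq_indeg (S : {set V}) u v :
  u \in S -> v \in S -> u != v -> (kappaS D S <= indeg D v)%N.
Proof.
move=> uS vS uv; apply: leq_trans (leq_imset_card (pair^~ v) _).
apply: kappaS_leq_card => H sH /subsetP SH.
have [w wvH Dwv] := strong_sub_in_arc sH (SH u uS) (SH v vS) uv.
by exists (w, v); rewrite // (imset_f (pair^~ v)) ?inE.
Qed.

Lemma kappa_k_leq_kappaS (S : {set V}) : (kappa_k D #|S| <= kappaS D S)%N.
Proof. exact: geq_bigmin_cond. Qed.

End DegreeBounds.

Lemma exists_card_set_mem (T : finType) (x : T) n :
  (0 < n)%N -> (n <= #|T|)%N -> exists2 S : {set T}, x \in S & #|S| = n.
Proof.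
case: n => // n _ nT.
have /card_geqP [s [s_uniq s_size sx]] : (n <= #|[set~ x]|)%N.
  by rewrite cardsC1 -ltnS (ltn_predK nT).
have xs : x \notin s by apply/negP => /sx; rewrite !inE eqxx.
exists [set y in x :: s]; first by rewrite inE mem_head.
by rewrite cardsE (card_uniqP _) //= ?xs ?s_size.
Qed.

Lemma kappa_k_leq_deg (V : finType) (D : rel V) k v :
  (2 <= k)%N -> (k <= #|V|)%N ->
  (kappa_k D k <= outdeg D v)%N /\ (kappa_k D k <= indeg D v)%N.
Proof.
move=> k2 kV; have [S vS cardS] := @exists_card_set_mem V v k (ltnW k2) kV.
have /card_gt0P [u] : (0 < #|S :\ v|)%N by move: k2; rewrite -cardS (cardsD1 v S) vS.
rewrite !inE => /andP [uv uS]; rewrite -cardS.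
split; apply: leq_trans (kappa_k_leq_kappaS D S) _.
  by apply: kappaS_leq_outdeg vS uS _; rewrite eq_sym.
exact: kappaS_leq_indeg uS vS uv.
Qed.

Theorem lemma3p2 (V : finType) (D : rel V) (k : nat) :
  irreflexive D -> (2 <= k)%N -> (k <= #|V|)%N ->
  (kappa_k D k <= min_outdeg D)%N /\ (kappa_k D k <= min_indeg D)%N.
Proof.
move=> _ k2 kV; have deg v := kappa_k_leq_deg D v k2 kV.
have /card_gt0P [v0 _] : (0 < #|V|)%N by apply: leq_trans (ltnW k2) kV.
have leq_bigmin (F : V -> nat) : (forall v, kappa_k D k <= F v)%N ->
    (kappa_k D k <= \big[minn/#|V|]_v F v)%N.
  move=> leF; apply: (big_ind (fun m => kappa_k D k <= m)%N) => //.
    exact: leq_trans (deg v0).1 (max_card _).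
  by move=> x y kx ky; rewrite leq_min kx ky.
by split; apply: leq_bigmin => v; case: (deg v).
Qed.
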